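(* If $L\in\mathrm{Gr}(V,m)$ and $L\cap\operatorname{int}(K)\neq\emptyset$, then $$\sigma(L)=\min_{v\in K,\ |||v|||=1}\ \max_{x\in L,\ \|x\|=1}\lambda_v(x)=\min_{v\in K,\ y\in L^\perp,\ u\in K^*,\ |||v|||=1,\ \langle u,v\rangle=1}\|u-y\|^*.$$
   Context: $V$ is a finite-dimensional real vector space with inner product $\langle\cdot,\cdot\rangle$; $K\subseteq V$ a regular closed convex cone (closed, convex, pointed, nonempty interior) with dual cone $K^*:=\{u:\langle u,x\rangle\ge0\ \forall x\in K\}$; $L^\perp$ the orthogonal complement; $\mathrm{Gr}(V,m)$ the set of $m$-dimensional subspaces ($1\le m<\dim V$). $\|\cdot\|,|||\cdot|||$ are arbitrary norms on $V$, $\|u\|^*:=\max_{\|x\|=1}\langle u,x\rangle$. For $v\in K\setminus\{0\}$ and $x\in V$, $\lambda_v(x):=\sup\{t\in\mathbb R: x-tv\in K\}\in[-\infty,\infty)$, and $\sigma(L):=\min_{v\in K,|||v|||=1}\max_{x\in L,\|x\|\le1}\lambda_v(x)$. *)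

From mathcomp Require Import ssreflect ssrfun ssrbool eqtype ssrnat fintype bigop.
From Stdlib Require Import Reals Classical ClassicalEpsilon.

Set Implicit Arguments.
Unset Strict Implicit.

Local Open Scope R_scope.

(* V = R^n with the standard inner product (any finite-dim. real inner
   product space is isometric to this). *)
Definition vec (n : nat) := 'I_n -> R.

Definition vzero {n} : vec n := fun _ => 0.
Definition vadd {n} (x y : vec n) : vec n := fun i => x i + y i.
Definition vscale {n} (a : R) (x : vec n) : vec n := fun i => a * x i.
Definition vopp {n} (x : vec n) : vec n := fun i => - x i.
Definition vsub {n} (x y : vec n) : vec n := fun i => x i - y i.
Definition inner {n} (x y : vec n) : R := \big[Rplus/0]_(i < n) (x i * y i).

Definition lincomb {n m} (c : 'I_m -> R) (b : 'I_m -> vec n) : vec n :=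
  fun j => \big[Rplus/0]_(i < m) (c i * b i j).

Definition in_Gr {n} (L : vec n -> Prop) (m : nat) : Prop :=
  exists b : 'I_m -> vec n,
    (forall c : 'I_m -> R, lincomb c b = vzero -> forall i, c i = 0) /\
    (forall x, L x <-> exists c, x = lincomb c b).

Definition orth {n} (L : vec n -> Prop) : vec n -> Prop :=
  fun y => forall x, L x -> inner x y = 0.

Definition is_norm {n} (N : vec n -> R) : Prop :=
  (forall x, 0 <= N x) /\
  (forall x, N x = 0 -> x = vzero) /\
  (forall a x, N (vscale a x) = Rabs a * N x) /\
  (forall x y, N (vadd x y) <= N x + N y).

(* Topology of R^n (all norms equivalent; we use coordinatewise notions) *)
Definition closedV {n} (K : vec n -> Prop) : Prop :=
  forall (xs : nat -> vec n) (x : vec n),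
    (forall k, K (xs k)) -> (forall i, Un_cv (fun k => xs k i) (x i)) -> K x.

Definition int_pt {n} (K : vec n -> Prop) (x : vec n) : Prop :=
  exists eps, 0 < eps /\ forall y : vec n, (forall i, Rabs (y i - x i) < eps) -> K y.

Definition regular_cone {n} (K : vec n -> Prop) : Prop :=
  closedV K /\
  K vzero /\
  (forall x t, K x -> 0 <= t -> K (vscale t x)) /\
  (forall x y, K x -> K y -> K (vadd x y)) /\
  (forall x, K x -> K (vopp x) -> x = vzero) /\
  (exists x, int_pt K x).

Definition dual_cone {n} (K : vec n -> Prop) : vec n -> Prop :=
  fun u => forall x, K x -> 0 <= inner u x.

Inductive ER := ERfin (r : R) | ERminf | ERpinf.

Definition ER_le (a b : ER) : Prop :=
  match a, b with
  | ERminf, _ => True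
  | _, ERpinf => True
  | ERfin x, ERfin y => x <= y
  | _, _ => False
  end.

Definition ERopp (a : ER) : ER :=
  match a with ERfin x => ERfin (- x) | ERminf => ERpinf | ERpinf => ERminf end.

Lemma not_or_not_bound (A : Prop) (E : R -> Prop) : ~ (A \/ ~ bound E) -> bound E.
Proof. intro H. apply NNPP. intro H'. apply H. right. exact H'. Qed.

Definition supER (S : ER -> Prop) : ER :=
  let E := fun r => S (ERfin r) in
  match excluded_middle_informative (S ERpinf \/ ~ bound E) with
  | left _ => ERpinf
  | right H =>
      match excluded_middle_informative (exists r, E r) with
      | left He => ERfin (proj1_sig (completeness E (not_or_not_bound H) He))
      | right _ => ERminf
      end
  end.

Definition infER (S : ER -> Prop) : ER := ERopp (supER (fun e => S (ERopp e))).

Definition supOver {A} (P : A -> Prop) (f : A -> ER) : ER :=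
  supER (fun e => exists a, P a /\ f a = e).
Definition infOver {A} (P : A -> Prop) (f : A -> ER) : ER :=
  infER (fun e => exists a, P a /\ f a = e).

Definition IsMaxOf {A} (P : A -> Prop) (f : A -> ER) (m : ER) : Prop :=
  (exists a, P a /\ f a = m) /\ (forall a, P a -> ER_le (f a) m).
Definition IsMinOf {A} (P : A -> Prop) (f : A -> ER) (m : ER) : Prop :=
  (exists a, P a /\ f a = m) /\ (forall a, P a -> ER_le m (f a)).

Definition lam {n} (K : vec n -> Prop) (v x : vec n) : ER :=
  supER (fun e => exists t, e = ERfin t /\ K (vsub x (vscale t v))).

Definition dualnorm {n} (N : vec n -> R) (u : vec n) : ER :=
  supOver (fun x => N x = 1) (fun x => ERfin (inner u x)).

Definition sigmaL {n} (K : vec n -> Prop) (N N3 : vec n -> R) (L : vec n -> Prop) : ER :=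
  infOver (fun v => K v /\ N3 v = 1)
          (fun v => supOver (fun x => L x /\ N x <= 1) (lam K v)).

(** The value function [phi v = max { lambda_v x | x in L, ||x|| <= 1 }] is
    attained for every unit vector [v] of [K] because the admissible set of
    pairs [(x, t)] with [x - t v] in [K] is compact, and [phi] is lower
    semicontinuous on the compact set of unit vectors of [K]: convexly mixing
    an optimal pair with a point of [L] interior to [K] absorbs small
    perturbations of [v].  Hence [sigma(L)] is a minimum; a maximiser for
    [lambda_v] can be rescaled onto the unit sphere of [L], so the two max-min
    expressions agree.  Weak duality: if [u] is in [K^*], [y] in [L^perp] and
    [<u, v> = 1], then for an optimal [x] on the unit sphere
    [<u - y, x> = <u, x> >= t <u, v> = t].  Strong duality: for the optimal
    pair [(v, s)] the points [(s + eps) v] lie outside the closed convex set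
    [{(x - k, x - l) | ||x|| <= 1, k in K, l in L}]; a supporting hyperplane
    at [(s v, 0)] yields [u] in [K^*] and [y] in [L^perp] with [<u, v> = 1] and
    [||u - y||^* <= s], the normalisation [<u, v> <> 0] coming from [L]
    meeting the interior of [K]. *)

From HB Require Import structures.
From mathcomp Require Import ssreflect ssrfun ssrbool eqtype ssrnat seq fintype bigop.
From Stdlib Require Import Reals Lra Lia Classical ClassicalEpsilon FunctionalExtensionality.
Local Open Scope R_scope.

Set Implicit Arguments.
Unset Strict Implicit.

HB.instance Definition _ := Monoid.isComLaw.Build R 0 Rplus
  (fun a b c => esym (Rplus_assoc a b c)) Rplus_comm Rplus_0_l.

Section RealSums.
Variable n : nat.
Implicit Types F G : 'I_n -> R.

Lemma sumR_ge0 F : (forall i, 0 <= F i) -> 0 <= \big[Rplus/0]_(i < n) F i.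
Proof. move=> H; elim/big_rec: _ => [|i y _ Hy]; [lra | have := H i; lra]. Qed.

Lemma sumR_le F G : (forall i, F i <= G i) ->
  \big[Rplus/0]_(i < n) F i <= \big[Rplus/0]_(i < n) G i.
Proof. move=> H; elim/big_rec2: _ => [|i y1 y2 _ Hy]; [lra | have := H i; lra]. Qed.

Lemma sumR_scale a F : \big[Rplus/0]_(i < n) (a * F i) = a * \big[Rplus/0]_(i < n) F i.
Proof. elim/big_rec2: _ => [|i y1 y2 _ ->]; ring. Qed.

Lemma sumR_add F G : \big[Rplus/0]_(i < n) (F i + G i) =
  \big[Rplus/0]_(i < n) F i + \big[Rplus/0]_(i < n) G i.
Proof. by rewrite big_split. Qed.

Lemma sumR_opp F : \big[Rplus/0]_(i < n) (- F i) = - \big[Rplus/0]_(i < n) F i.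
Proof. elim/big_rec2: _ => [|i y1 y2 _ ->]; ring. Qed.

Lemma sumR_term_le F j : (forall i, 0 <= F i) -> F j <= \big[Rplus/0]_(i < n) F i.
Proof.
move=> H; rewrite (bigD1 j) //=.
have : 0 <= \big[Rplus/0]_(i < n | i != j) F i.
  by elim/big_rec: _ => [|i y _ Hy]; [lra | have := H i; lra].
by rewrite -{1}(Rplus_0_r (F j)); apply: Rplus_le_compat_l.
Qed.

Lemma sumR_eq0 F j : (forall i, 0 <= F i) -> \big[Rplus/0]_(i < n) F i = 0 -> F j = 0.
Proof. move=> H Hs; have := @sumR_term_le F j H; have := H j; lra. Qed.

Lemma sumR_cv (a : nat -> 'I_n -> R) (l : 'I_n -> R) :
  (forall i, Un_cv (fun k => a k i) (l i)) ->
  Un_cv (fun k => \big[Rplus/0]_(i < n) a k i) (\big[Rplus/0]_(i < n) l i).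
Proof.
move=> H; rewrite unlock; elim: (index_enum _) => [|j r IH] /=.
  move=> e He; exists 0%nat => k _; rewrite /R_dist Rminus_0_r Rabs_R0; lra.
exact: CV_plus.
Qed.

End RealSums.

Lemma inv_INR_S_gt0 (k : nat) : 0 < / (INR k + 1).
Proof. apply: Rinv_0_lt_compat; have := pos_INR k; lra. Qed.

Lemma inv_INR_S_le1 (k : nat) : / (INR k + 1) <= 1.
Proof. rewrite -Rinv_1; apply: Rinv_le_contravar; have := pos_INR k; lra. Qed.

Lemma cv_const c : Un_cv (fun _ => c) c.
Proof. move=> e He; exists 0%nat => k _; rewrite /R_dist Rminus_diag Rabs_R0; lra. Qed.

Lemma inv_INR_S_cv : Un_cv (fun k => / (INR k + 1)) 0.
Proof.
move=> e He; case: (archimed_cor1 e He) => N [HN HN0]; exists N => k Hk.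
rewrite /R_dist Rminus_0_r Rabs_right; last exact/Rle_ge/Rlt_le/inv_INR_S_gt0.
have HkN : INR N <= INR k by apply: le_INR; lia.
have H0 : 0 < INR N by apply: lt_0_INR; lia.
apply: Rle_lt_trans HN; apply: Rinv_le_contravar; lra.
Qed.

Lemma cv_of_sub_cv0 (u : nat -> R) l : Un_cv (fun k => u k - l) 0 -> Un_cv u l.
Proof.
move=> H e He; case: (H e He) => K HK; exists K => k Hk.
by have := HK k Hk; rewrite /R_dist Rminus_0_r.
Qed.

Lemma cv_add_inv_INR_S c : Un_cv (fun k => c + / (INR k + 1)) c.
Proof. by have := CV_plus _ _ _ _ (cv_const c) inv_INR_S_cv; rewrite Rplus_0_r. Qed.

Lemma cv_squeeze0 (u w : nat -> R) C :
  (forall k, Rabs (u k) <= C * w k) -> Un_cv w 0 -> Un_cv u 0.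
Proof.
move=> H Hw e He.
have hC := Rabs_pos C.
case: (Hw (e / (Rabs C + 1))) => [|K HK]; first by apply: Rdiv_lt_0_compat; lra.
exists K => k Hk; have := HK k Hk; rewrite /R_dist !Rminus_0_r => h.
apply: Rle_lt_trans (H k) _.
have h1 : C * w k <= Rabs C * Rabs (w k) by rewrite -Rabs_mult; exact: Rle_abs.
have h2 : (Rabs C + 1) * Rabs (w k) < e.
  have -> : e = (Rabs C + 1) * (e / (Rabs C + 1)) by field; lra.
  apply: Rmult_lt_compat_l => //; lra.
have := Rabs_pos (w k); nra.
Qed.

Lemma le_of_forall_scaled_le a b : 0 <= a ->
  (forall th, 0 < th < 1 -> (1 - th) * a <= b) -> a <= b.
Proof.
move=> a0 H; apply: Rle_plus_epsilon => e he.
pose th := e / (2 * (a + e)).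
have E : th * (2 * (a + e)) = e by rewrite /th; field; lra.
have th0 : 0 < th by apply: Rdiv_lt_0_compat; lra.
have th1 : th < 1 by apply: (Rmult_lt_reg_r (2 * (a + e))); [lra | rewrite E; lra].
have : th * a <= th * (2 * (a + e)) by apply: Rmult_le_compat_l; lra.
have := H th (conj th0 th1); lra.
Qed.

Lemma lub_approx (E : R -> Prop) s (j : nat) : is_lub E s -> exists r, E r /\ s - / (INR j + 1) < r.
Proof.
move=> [_ Hlub]; apply: NNPP => Hno.
have : s <= s - / (INR j + 1).
  apply: Hlub => r Er; apply: Rnot_lt_le => hr; apply: Hno; exists r; split => //; lra.
have := inv_INR_S_gt0 j; lra.
Qed.

Definition strict_incr (phi : nat -> nat) := forall k, (phi k < phi k.+1)%coq_nat.

Lemma strict_incr_ge phi : strict_incr phi -> forall k, (k <= phi k)%coq_nat.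
Proof. move=> H; elim=> [|k IH]; first lia. have := H k; lia. Qed.

Lemma strict_incr_mono phi : strict_incr phi ->
  forall a b, (a <= b)%coq_nat -> (phi a <= phi b)%coq_nat.
Proof.
move=> H a; elim=> [|b IH] Hab; first by have -> : a = 0%nat by lia.
case: (Nat.eq_dec a b.+1) => [->|Hne]; first lia.
have := H b; have := IH ltac:(lia); lia.
Qed.

Lemma strict_incr_comp phi psi :
  strict_incr phi -> strict_incr psi -> strict_incr (fun k => phi (psi k)).
Proof. move=> H1 H2 k; have := strict_incr_mono H1 (H2 k); have := H1 (psi k); lia. Qed.

Lemma cv_subseq u l phi : strict_incr phi -> Un_cv u l -> Un_cv (fun k => u (phi k)) l.
Proof.
move=> Hp Hu e He; case: (Hu e He) => N HN; exists N => k Hk.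
apply: HN; have := strict_incr_ge Hp k; lia.
Qed.

Lemma bounded_cv_subseq (u : nat -> R) M : (forall k, Rabs (u k) <= M) ->
  exists phi, strict_incr phi /\ exists l, Un_cv (fun k => u (phi k)) l.
Proof.
move=> Hb.
have [l Hl] : exists l, ValAdh u l.
  apply: (Bolzano_Weierstrass u (fun c => -M <= c <= M)); first exact: compact_P3.
  move=> k; have := Hb k; have := Rle_abs (u k); have := Rle_abs (- u k).
  rewrite Rabs_Ropp; lra.
have H : forall kN : nat * nat,
    exists p, (kN.2 <= p)%coq_nat /\ Rabs (u p - l) < / (INR kN.1 + 1).
  case=> k N /=.
  have [|p [Hp1 Hp2]] := Hl (disc l (mkposreal _ (inv_INR_S_gt0 k))) N.
    by exists (mkposreal _ (inv_INR_S_gt0 k)).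
  by exists p.
case: (ClassicalEpsilon.choice _ H) => g Hg.
(* [phi] picks, at stage [k], an index past [phi (k - 1)] within [1/(k+1)] of [l]. *)
pose phi := fix phi k := if k is k'.+1 then g (k, (phi k').+1) else g (0, 0)%nat.
have Hphi : strict_incr phi by move=> k; have := (Hg (k.+1, (phi k).+1)).1; simpl; lia.
have Hclose : forall k, Rabs (u (phi k) - l) < / (INR k + 1).
  by case=> [|k]; [exact: (Hg (0, 0)%nat).2 | exact: (Hg (k.+1, (phi k).+1)).2].
exists phi; split => //; exists l => e He.
case: (inv_INR_S_cv He) => K HK; exists K => k Hk.
apply: Rlt_trans (Hclose k) _; have := HK k Hk; rewrite /R_dist Rminus_0_r.
exact: Rle_lt_trans (Rle_abs _).
Qed.

Lemma vec_eq n (x y : vec n) : (forall i, x i = y i) -> x = y.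
Proof. exact: functional_extensionality. Qed.

Definition conv n (xs : nat -> vec n) (x : vec n) := forall i, Un_cv (fun k => xs k i) (x i).

Lemma bounded_conv_subseq n (xs : nat -> vec n) M : (forall k i, Rabs (xs k i) <= M) ->
  exists phi, strict_incr phi /\ exists x, conv (fun k => xs (phi k)) x.
Proof.
move=> Hb.
suff G : forall r : seq 'I_n, exists phi, strict_incr phi /\ exists x : vec n,
    forall i, i \in r -> Un_cv (fun k => xs (phi k) i) (x i).
  have [phi [Hphi [x Hx]]] := G (index_enum 'I_n).
  by exists phi; split => //; exists x => i; apply: Hx; exact: mem_index_enum.
elim=> [|j r [phi [Hphi [x Hx]]]].
  exists (fun k : nat => k); split; [move=> k; lia | by exists vzero].
have [psi [Hpsi [l Hl]]] := @bounded_cv_subseq (fun k => xs (phi k) j) M (fun k => Hb _ j).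
exists (fun k => phi (psi k)); split; first exact: strict_incr_comp.
exists (fun i => if i == j then l else x i) => i.
rewrite in_cons; case: (eqVneq i j) => [->|Hne] //= Hi.
exact: cv_subseq Hpsi (Hx i Hi).
Qed.

Section InnerProduct.
Variable n : nat.
Implicit Types x y z : vec n.

Lemma inner_sym x y : inner x y = inner y x.
Proof. by rewrite /inner; apply: eq_bigr => i _; ring. Qed.
Lemma inner_addl x y z : inner (vadd x y) z = inner x z + inner y z.
Proof. by rewrite /inner -sumR_add; apply: eq_bigr => i _; rewrite /vadd; ring. Qed.
Lemma inner_addr x y z : inner z (vadd x y) = inner z x + inner z y.
Proof. by rewrite inner_sym inner_addl !(inner_sym z). Qed.
Lemma inner_scalel a x y : inner (vscale a x) y = a * inner x y.
Proof. by rewrite /inner -sumR_scale; apply: eq_bigr => i _; rewrite /vscale; ring. Qed.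
Lemma inner_scaler a x y : inner y (vscale a x) = a * inner y x.
Proof. by rewrite inner_sym inner_scalel inner_sym. Qed.
Lemma inner_subl x y z : inner (vsub x y) z = inner x z - inner y z.
Proof.
by rewrite /inner /Rminus -sumR_opp -sumR_add; apply: eq_bigr => i _; rewrite /vsub; ring.
Qed.
Lemma inner_subr x y z : inner z (vsub x y) = inner z x - inner z y.
Proof. by rewrite inner_sym inner_subl !(inner_sym z). Qed.
Lemma inner_oppl x y : inner (vopp x) y = - inner x y.
Proof. by rewrite /inner -sumR_opp; apply: eq_bigr => i _; rewrite /vopp; ring. Qed.
Lemma inner_zerol x : inner vzero x = 0.
Proof. by rewrite /inner; elim/big_rec: _ => [|i y _ ->] //; rewrite /vzero; ring. Qed.
Lemma inner_zeror x : inner x vzero = 0.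
Proof. by rewrite inner_sym inner_zerol. Qed.
Lemma inner_ge0 x : 0 <= inner x x.
Proof. apply: sumR_ge0 => i; nra. Qed.
Lemma coord_sq_le_inner x i : x i * x i <= inner x x.
Proof. apply: (@sumR_term_le _ (fun i => x i * x i)) => j; nra. Qed.
Lemma inner_eq0 x : inner x x = 0 -> x = vzero.
Proof.
move=> H; apply: vec_eq => i.
have := @sumR_eq0 _ (fun i => x i * x i) i (fun j => ltac:(nra)) H; rewrite /vzero; nra.
Qed.
Lemma inner_expand x w t :
  inner (vadd x (vscale t w)) (vadd x (vscale t w)) =
  inner x x + 2 * t * inner x w + t * t * inner w w.
Proof.
rewrite inner_addl !inner_addr !inner_scalel !inner_scaler (inner_sym w x); ring.
Qed.

Lemma conv_sub (xs ys : nat -> vec n) x y : conv xs x -> conv ys y ->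
  conv (fun k => vsub (xs k) (ys k)) (vsub x y).
Proof. move=> H1 H2 i; exact: CV_minus. Qed.
Lemma conv_scale (a : nat -> R) al (xs : nat -> vec n) x : Un_cv a al -> conv xs x ->
  conv (fun k => vscale (a k) (xs k)) (vscale al x).
Proof. move=> H1 H2 i; exact: CV_mult. Qed.
Lemma conv_const x : conv (fun _ => x) x.
Proof. move=> i; exact: cv_const. Qed.
Lemma conv_subseq (xs : nat -> vec n) x phi : strict_incr phi -> conv xs x ->
  conv (fun k => xs (phi k)) x.
Proof. move=> Hp H i; exact: cv_subseq Hp (H i). Qed.
Lemma conv_inner (xs ys : nat -> vec n) x y : conv xs x -> conv ys y ->
  Un_cv (fun k => inner (xs k) (ys k)) (inner x y).
Proof. move=> H1 H2; apply: (@sumR_cv n (fun k i => xs k i * ys k i)) => i; exact: CV_mult. Qed.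

End InnerProduct.

(** * Norms on [R^n] *)

Definition sabs n (x : vec n) := \big[Rplus/0]_(i < n) Rabs (x i).

Section SumNorm.
Variable n : nat.
Implicit Types x y : vec n.

Lemma sabs_ge0 x : 0 <= sabs x.
Proof. apply: sumR_ge0 => i; exact: Rabs_pos. Qed.
Lemma coord_le_sabs x i : Rabs (x i) <= sabs x.
Proof. apply: (@sumR_term_le _ (fun i => Rabs (x i))) => j; exact: Rabs_pos. Qed.
Lemma sabs_scale a x : sabs (vscale a x) = Rabs a * sabs x.
Proof. by rewrite /sabs -sumR_scale; apply: eq_bigr => i _; rewrite /vscale Rabs_mult. Qed.
Lemma sabs_add x y : sabs (vadd x y) <= sabs x + sabs y.
Proof. rewrite /sabs -sumR_add; apply: sumR_le => i; exact: Rabs_triang. Qed.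
Lemma sabs_eq0 x : sabs x = 0 -> x = vzero.
Proof.
move=> H; apply: vec_eq => i; apply: NNPP => /Rabs_no_R0; apply.
exact: (@sumR_eq0 _ (fun i => Rabs (x i)) i (fun j => Rabs_pos _) H).
Qed.
Lemma sabs_cv (xs : nat -> vec n) x : conv xs x -> Un_cv (fun k => sabs (xs k)) (sabs x).
Proof. move=> H; apply: (@sumR_cv n (fun k i => Rabs (xs k i))) => i; exact: cv_cvabs. Qed.
Lemma sabs_sub_cv (xs : nat -> vec n) x : conv xs x -> Un_cv (fun k => sabs (vsub (xs k) x)) 0.
Proof.
move=> H; have := sabs_cv (conv_sub H (conv_const x)).
suff -> : sabs (vsub x x) = 0 by [].
by rewrite /sabs; elim/big_rec: _ => [|i y _ ->] //; rewrite /vsub Rminus_diag Rabs_R0; ring.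
Qed.

End SumNorm.

Section Norm.
Variable n : nat.
Variable N : vec n -> R.
Hypothesis HN : is_norm N.
Implicit Types x y : vec n.

Lemma norm_ge0 x : 0 <= N x. Proof. by case: HN => H _; apply: H. Qed.
Lemma norm_eq0 x : N x = 0 -> x = vzero. Proof. by case: HN => _ [H _]; apply: H. Qed.
Lemma normZ a x : N (vscale a x) = Rabs a * N x.
Proof. by case: HN => _ [_ [H _]]; apply: H. Qed.
Lemma norm_triangle x y : N (vadd x y) <= N x + N y.
Proof. by case: HN => _ [_ [_ H]]; apply: H. Qed.

Lemma norm_zero : N vzero = 0.
Proof.
have -> : (vzero : vec n) = vscale 0 vzero by apply: vec_eq => i; rewrite /vscale /vzero; ring.
by rewrite normZ Rabs_R0 Rmult_0_l.
Qed.

Lemma norm_sub_sym x y : N (vsub x y) = N (vsub y x).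
Proof.
have -> : vsub x y = vscale (-1) (vsub y x) by apply: vec_eq => i; rewrite /vscale /vsub; ring.
by rewrite normZ Rabs_Ropp Rabs_R1 Rmult_1_l.
Qed.

Lemma norm_le_sub x y : N x <= N y + N (vsub x y).
Proof.
have {1}-> : x = vadd y (vsub x y) by apply: vec_eq => i; rewrite /vadd /vsub; ring.
exact: norm_triangle.
Qed.

Lemma norm_convex_comb x y th : N x <= 1 -> N y <= 1 -> 0 <= th <= 1 ->
  N (vadd (vscale (1 - th) x) (vscale th y)) <= 1.
Proof.
move=> Nx Ny hth; apply: Rle_trans (norm_triangle _ _) _.
rewrite !normZ !Rabs_right; nra.
Qed.

Lemma norm_normalize x : 0 < N x -> N (vscale (/ N x) x) = 1.
Proof.
move=> Nx; rewrite normZ Rabs_right; last exact/Rle_ge/Rlt_le/Rinv_0_lt_compat.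
by field; lra.
Qed.

Definition unit_vec (i : 'I_n) : vec n := fun j => if i == j then 1 else 0.

Lemma norm_sum_le (I : Type) (r : seq I) (F : I -> vec n) :
  N (fun j => \big[Rplus/0]_(i <- r) F i j) <= \big[Rplus/0]_(i <- r) N (F i).
Proof.
elim: r => [|i r IH].
  have -> : (fun j => \big[Rplus/0]_(i <- [::]) F i j) = vzero.
    by apply: vec_eq => j; rewrite big_nil.
  rewrite big_nil norm_zero; lra.
have -> : (fun j => \big[Rplus/0]_(k <- i :: r) F k j) =
          vadd (F i) (fun j => \big[Rplus/0]_(k <- r) F k j).
  by apply: vec_eq => j; rewrite big_cons.
rewrite big_cons; apply: Rle_trans (norm_triangle _ _) _; lra.
Qed.

Lemma norm_le_sabs : exists C, 0 <= C /\ forall x, N x <= C * sabs x.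
Proof.
pose C := \big[Rplus/0]_(i < n) N (unit_vec i).
have C0 : 0 <= C by apply: sumR_ge0 => i; exact: norm_ge0.
exists C; split => // x.
have {1}-> : x = fun j => \big[Rplus/0]_(i < n) vscale (x i) (unit_vec i) j.
  apply: vec_eq => j; rewrite (bigD1 j) //= big1 /vscale /unit_vec ?eqxx; first ring.
  by move=> i /negbTE ->; ring.
apply: Rle_trans (norm_sum_le _ _) _.
rewrite /sabs -sumR_scale; apply: sumR_le => i; rewrite normZ Rmult_comm.
apply: Rmult_le_compat_r; first exact: Rabs_pos.
exact: (@sumR_term_le _ (fun i => N (unit_vec i)) i (fun j => norm_ge0 _)).
Qed.

Lemma norm_cv (xs : nat -> vec n) x : conv xs x -> Un_cv (fun k => N (xs k)) (N x).
Proof.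
move=> H; have [C [C0 HC]] := norm_le_sabs.
apply: cv_of_sub_cv0; apply: (cv_squeeze0 (C := C) _ (sabs_sub_cv H)) => k.
have h1 := norm_le_sub (xs k) x; have h2 := norm_le_sub x (xs k).
rewrite norm_sub_sym in h2; have := HC (vsub (xs k) x).
move=> h3; apply: Rabs_le; lra.
Qed.

(* By compactness of the unit sphere of [sabs]. *)
Lemma sabs_le_norm : exists c, 0 < c /\ forall x, sabs x <= c * N x.
Proof.
apply: NNPP => Hno.
have H : forall j : nat, exists x, (INR j + 1) * N x < sabs x.
  move=> j; apply: NNPP => Hj; apply: Hno; exists (INR j + 1); split.
    by have := pos_INR j; lra.
  by move=> x; apply: Rnot_lt_le => hx; apply: Hj; exists x.
case: (ClassicalEpsilon.choice _ H) => xs Hxs.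
have Hpos : forall j, 0 < sabs (xs j).
  by move=> j; have := Hxs j; have := norm_ge0 (xs j); have := pos_INR j; nra.
pose ys j := vscale (/ sabs (xs j)) (xs j).
have Hinv : forall j, 0 < / sabs (xs j) by move=> j; exact/Rinv_0_lt_compat/Hpos.
have Ys1 : forall j, sabs (ys j) = 1.
  move=> j; rewrite /ys sabs_scale Rabs_right; last exact/Rle_ge/Rlt_le.
  by field; apply: Rgt_not_eq; apply: Hpos.
have YsN : forall j, N (ys j) <= / (INR j + 1).
  move=> j; rewrite /ys normZ Rabs_right; last exact/Rle_ge/Rlt_le.
  have hp := Hpos j; have hx := Hxs j; have hj := pos_INR j.
  apply: Rlt_le; apply: (Rmult_lt_reg_l (sabs (xs j) * (INR j + 1))); first nra.
  have -> : sabs (xs j) * (INR j + 1) * (/ sabs (xs j) * N (xs j)) = (INR j + 1) * N (xs j).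
    by field; lra.
  by have -> : sabs (xs j) * (INR j + 1) * / (INR j + 1) = sabs (xs j) by field; lra.
have Yb : forall j i, Rabs (ys j i) <= 1 by move=> j i; rewrite -(Ys1 j); exact: coord_le_sabs.
have [phi [Hphi [y Hy]]] := bounded_conv_subseq Yb.
have Sy : sabs y = 1.
  have := sabs_cv Hy; have -> : (fun k => sabs (ys (phi k))) = (fun _ => 1).
    by apply: functional_extensionality => k; rewrite Ys1.
  by move=> h; exact: UL_sequence h (cv_const 1).
have Ny : N y <= 0.
  exact: Rle_cv_lim (fun k => YsN (phi k)) (norm_cv Hy) (cv_subseq Hphi inv_INR_S_cv).
have y0 : y = vzero by apply: norm_eq0; have := norm_ge0 y; lra.
have : sabs y = 0.
  by rewrite y0 /sabs; elim/big_rec: _ => [|i s _ ->] //; rewrite /vzero Rabs_R0; ring.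
lra.
Qed.

Lemma norm_ball_bounded : exists c, 0 < c /\ forall x, N x <= 1 -> forall i, Rabs (x i) <= c.
Proof.
have [c [c0 Hc]] := sabs_le_norm; exists c; split => // x Hx i.
apply: Rle_trans (coord_le_sabs x i) _; apply: Rle_trans (Hc x) _.
have := norm_ge0 x; nra.
Qed.

End Norm.

(** * Suprema and infima in the extended reals *)

Lemma ER_le_trans a b c : ER_le a b -> ER_le b c -> ER_le a c.
Proof. case: a => [x||]; case: b => [y||]; case: c => [z||] //=; lra. Qed.
Lemma ER_le_antisym a b : ER_le a b -> ER_le b a -> a = b.
Proof. case: a => [x||]; case: b => [y||] //= h1 h2; f_equal; lra. Qed.
Lemma ER_le_opp a b : ER_le a b -> ER_le (ERopp b) (ERopp a).
Proof. case: a => [x||]; case: b => [y||] //=; lra. Qed.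
Lemma ERoppK a : ERopp (ERopp a) = a.
Proof. by case: a => [x||] //=; rewrite Ropp_involutive. Qed.

Lemma supER_ub (S : ER -> Prop) e : S e -> ER_le e (supER S).
Proof.
move=> He; rewrite /supER.
case: excluded_middle_informative => [_|H]; first by case: e He.
case: excluded_middle_informative => [Hex|Hnex].
  case: (completeness _ _ _) => l [Hub _] /=.
  case: e He => [x||] He //=; first exact: Hub.
  by exfalso; apply: H; left.
case: e He => [x||] He //=; exfalso; [by apply: Hnex; exists x | by apply: H; left].
Qed.

Lemma supER_least (S : ER -> Prop) M : (forall e, S e -> ER_le e M) -> ER_le (supER S) M.
Proof.
move=> HM; rewrite /supER.
case: excluded_middle_informative => [[Hp|Hnb]|H].
- by have := HM _ Hp; case: M {HM}.
- case: M HM => [m||] HM //=; apply: Hnb; [exists m | exists 0] => r Hr; by have := HM _ Hr.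
- case: excluded_middle_informative => [Hex|Hnex] //=.
  case: (completeness _ _ _) => l [_ Hl] /=.
  case: M HM => [m||] HM //=.
  + by apply: Hl => r Hr; have := HM _ Hr.
  + by case: Hex => r Hr; have := HM _ Hr.
Qed.

Lemma infER_lb (S : ER -> Prop) e : S e -> ER_le (infER S) e.
Proof.
move=> He; rewrite /infER -[X in ER_le _ X](ERoppK e); apply: ER_le_opp.
by apply: supER_ub; rewrite ERoppK.
Qed.

Lemma infER_greatest (S : ER -> Prop) M : (forall e, S e -> ER_le M e) -> ER_le M (infER S).
Proof.
move=> HM; rewrite /infER -[X in ER_le X _](ERoppK M); apply: ER_le_opp.
by apply: supER_least => e /HM /ER_le_opp; rewrite ERoppK.
Qed.

Lemma IsMaxOf_sup A (P : A -> Prop) f M : IsMaxOf P f M -> supOver P f = M.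
Proof.
case=> [[a [Ha <-]] H]; apply: ER_le_antisym.
  by apply: supER_least => e [b [Hb <-]]; exact: H.
by apply: supER_ub; exists a.
Qed.

Lemma IsMinOf_inf A (P : A -> Prop) f M : IsMinOf P f M -> infOver P f = M.
Proof.
case=> [[a [Ha <-]] H]; apply: ER_le_antisym.
  by apply: infER_lb; exists a.
by apply: infER_greatest => e [b [Hb <-]]; exact: H.
Qed.

Lemma dualnorm_ge n (N : vec n -> R) u x : N x = 1 -> ER_le (ERfin (inner u x)) (dualnorm N u).
Proof. by move=> Nx; apply: supER_ub; exists x. Qed.

Lemma dualnorm_le n (N : vec n -> R) u M :
  (forall x, N x = 1 -> inner u x <= M) -> ER_le (dualnorm N u) (ERfin M).
Proof. by move=> H; apply: supER_least => e [x [Nx <-]]; exact: H. Qed.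

Lemma lam_ge n (K : vec n -> Prop) v x t : K (vsub x (vscale t v)) -> ER_le (ERfin t) (lam K v x).
Proof. by move=> H; apply: supER_ub; exists t. Qed.

Lemma lam_le n (K : vec n -> Prop) v x M :
  (forall t, K (vsub x (vscale t v)) -> t <= M) -> ER_le (lam K v x) (ERfin M).
Proof. by move=> H; apply: supER_least => e [t [-> Ht]] /=; exact: H. Qed.

(** * Subspaces *)

Section Lincomb.
Variables n m : nat.
Variable b : 'I_m -> vec n.

Lemma lincomb_add c d : lincomb (vadd c d) b = vadd (lincomb c b) (lincomb d b).
Proof. apply: vec_eq => j; rewrite /lincomb /vadd -sumR_add; apply: eq_bigr => i _; ring. Qed.
Lemma lincomb_scale a c : lincomb (vscale a c) b = vscale a (lincomb c b).
Proof. apply: vec_eq => j; rewrite /lincomb /vscale -sumR_scale; apply: eq_bigr => i _; ring. Qed.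
Lemma lincomb_zero : lincomb vzero b = vzero.
Proof. apply: vec_eq => j; rewrite /lincomb /vzero; elim/big_rec: _ => [|i y _ ->] //; ring. Qed.
Lemma lincomb_conv (cs : nat -> vec m) c :
  conv cs c -> conv (fun k => lincomb (cs k) b) (lincomb c b).
Proof.
move=> H j; apply: (@sumR_cv m (fun k i => cs k i * b i j)) => i.
exact: CV_mult (H i) (cv_const _).
Qed.

End Lincomb.

Section Subspace.
Variables n m : nat.
Variable L : vec n -> Prop.
Hypothesis HL : in_Gr L m.

Lemma subspace_add x y : L x -> L y -> L (vadd x y).
Proof.
case: HL => b [_ Hb] /Hb [c ->] /Hb [d ->]; apply/Hb; exists (vadd c d); by rewrite lincomb_add.
Qed.
Lemma subspace_scale a x : L x -> L (vscale a x).
Proof.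
by case: HL => b [_ Hb] /Hb [c ->]; apply/Hb; exists (vscale a c); rewrite lincomb_scale.
Qed.
Lemma subspace_zero : L vzero.
Proof. case: HL => b [_ Hb]; apply/Hb; exists vzero; by rewrite lincomb_zero. Qed.

(* Coordinates in a basis are controlled by the norm [c |-> sabs (lincomb c b)],
   so a convergent sequence of [L] has a convergent subsequence of coordinates. *)
Lemma subspace_closed : closedV L.
Proof.
move=> xs x HxL Hx; case: HL => b [Hind Hb].
pose Nb (c : vec m) := sabs (lincomb c b).
have HNb : is_norm Nb.
  split; first by move=> c; exact: sabs_ge0.
  split; first by move=> c /sabs_eq0 h; apply: vec_eq => i; exact: Hind _ h i.
  split; first by move=> a c; rewrite /Nb lincomb_scale sabs_scale.
  by move=> c d; rewrite /Nb lincomb_add; exact: sabs_add.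
have [cb [cb0 Hcb]] := sabs_le_norm HNb.
have [cs Hcs] : exists cs : nat -> vec m, forall k, xs k = lincomb (cs k) b.
  by apply: (ClassicalEpsilon.choice (fun k c => xs k = lincomb c b)) => k; apply/Hb.
have [M [_ HM]] := maj_by_pos _ (exist _ _ (sabs_cv Hx)).
have Bd : forall k i, Rabs (cs k i) <= cb * M.
  move=> k i; apply: Rle_trans (coord_le_sabs _ i) _; apply: Rle_trans (Hcb _) _.
  apply: Rmult_le_compat_l; first lra.
  by rewrite /Nb -Hcs; apply: Rle_trans (HM k); exact: Rle_abs.
have [phi [Hphi [c Hc]]] := bounded_conv_subseq Bd.
apply/Hb; exists c; apply: vec_eq => j.
apply: (UL_sequence _ _ _ (cv_subseq Hphi (Hx j))).
by move: (lincomb_conv b Hc j); congr Un_cv; apply: functional_extensionality => k; rewrite Hcs.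
Qed.

End Subspace.

(** * Separation from a closed convex set *)

Definition convexV d (C : vec d -> Prop) := forall x y th, C x -> C y -> 0 <= th <= 1 ->
  C (vadd (vscale (1 - th) x) (vscale th y)).

Lemma quad_nonneg A W : 0 <= W -> (forall th, 0 < th <= 1 -> 0 <= 2 * th * A + th * th * W) ->
  0 <= A.
Proof.
move=> W0 H; apply: Rnot_lt_le => hA.
pose th := - A / (W - A).
have h0 : 0 < th by apply: Rdiv_lt_0_compat; lra.
have h1 : th <= 1.
  apply: (Rmult_le_reg_l (W - A)); first lra.
  have -> : (W - A) * th = - A by rewrite /th; field; lra.
  lra.
have := H th (conj h0 h1).
have -> : 2 * th * A + th * th * W = th * (A * (W - 2 * A) / (W - A)) by rewrite /th; field; lra.
have : A * (W - 2 * A) / (W - A) < 0.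
  apply: Rmult_neg_pos; first nra.
  apply: Rinv_0_lt_compat; lra.
nra.
Qed.

Lemma abs_le_sq1 a : Rabs a <= a * a + 1.
Proof. rewrite /Rabs; case: Rcase_abs => h; nra. Qed.

Section Separation.
Variable d : nat.
Variable C : vec d -> Prop.
Hypotheses (Cconv : convexV C) (Ccl : closedV C) (Cne : exists c, C c).

Lemma closed_nearest_point p : exists c0, C c0 /\
  forall c, C c -> inner (vsub c0 p) (vsub c0 p) <= inner (vsub c p) (vsub c p).
Proof.
pose f c := inner (vsub c p) (vsub c p).
pose D r := exists c, C c /\ r = - f c.
case: Cne => c0 C0.
have Db : bound D by exists 0 => r [c [_ ->]]; have := inner_ge0 (vsub c p); rewrite /f; lra.
case: (completeness D Db (ex_intro _ _ (ex_intro _ c0 (conj C0 erefl)))) => sg Hsg.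
have Hf : forall c, C c -> - sg <= f c.
  by move=> c Cc; have := Hsg.1 _ (ex_intro _ c (conj Cc erefl)); lra.
have H : forall j : nat, exists c, C c /\ f c < - sg + / (INR j + 1).
  by move=> j; have [r [[c [Cc ->]] Hr]] := lub_approx j Hsg; exists c; split => //; lra.
case: (ClassicalEpsilon.choice _ H) => cs Hcs.
have Bd : forall k i, Rabs (cs k i) <= sabs p + (- sg + 1) + 1.
  move=> k i.
  have h1 := coord_sq_le_inner (vsub (cs k) p) i.
  have h2 := (Hcs k).2; have h3 := inv_INR_S_le1 k.
  have h4 := abs_le_sq1 (cs k i - p i); have h5 := coord_le_sabs p i.
  have h6 := Rabs_triang (cs k i - p i) (p i).
  have -> : cs k i = cs k i - p i + p i by ring.
  rewrite /f /vsub in h1 h2 *; lra.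
have [phi [Hphi [cl Hcl]]] := bounded_conv_subseq Bd.
exists cl; split; first exact: Ccl (fun k => (Hcs (phi k)).1) Hcl.
move=> c Cc; apply: Rle_trans (Hf c Cc).
apply: (Rle_cv_lim (fun k => Rlt_le _ _ (Hcs (phi k)).2)).
  by apply: conv_inner; apply: conv_sub => //; exact: conv_const.
exact: cv_subseq Hphi (cv_add_inv_INR_S _).
Qed.

Lemma nearest_point_obtuse p c0 : C c0 ->
  (forall c, C c -> inner (vsub c0 p) (vsub c0 p) <= inner (vsub c p) (vsub c p)) ->
  forall c, C c -> 0 <= inner (vsub c0 p) (vsub c c0).
Proof.
move=> C0 Hmin c Cc; apply: (quad_nonneg (inner_ge0 (vsub c c0))) => th hth.
have Cth := Cconv C0 Cc (conj (Rlt_le _ _ hth.1) hth.2).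
have E : vsub (vadd (vscale (1 - th) c0) (vscale th c)) p =
         vadd (vsub c0 p) (vscale th (vsub c c0)).
  by apply: vec_eq => i; rewrite /vadd /vscale /vsub; ring.
by move: (Hmin _ Cth); rewrite E inner_expand; lra.
Qed.

Lemma separation p : ~ C p -> exists q, inner q q = 1 /\ forall c, C c -> inner q c <= inner q p.
Proof.
move=> Cp; have [c0 [C0 Hmin]] := closed_nearest_point p.
have Hobt := nearest_point_obtuse C0 Hmin.
pose q0 := vsub p c0.
have q0pos : 0 < inner q0 q0.
  case: (Rle_lt_or_eq_dec _ _ (inner_ge0 q0)) => // /esym /inner_eq0 e; case: Cp.
  suff -> : p = c0 by [].
  by apply: vec_eq => i; have := congr1 (fun g => g i) e; rewrite /q0 /vsub /vzero; lra.
have Hq0 : forall c, C c -> inner q0 c <= inner q0 p.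
  move=> c Cc; have := Hobt c Cc.
  have -> : vsub c0 p = vscale (-1) q0 by apply: vec_eq => i; rewrite /q0 /vscale /vsub; ring.
  rewrite inner_scalel !inner_subr.
  have : inner q0 c0 = inner q0 p - inner q0 q0 by rewrite /q0 inner_subr; ring.
  lra.
pose sq := sqrt (inner q0 q0).
have sq0 : 0 < sq by apply: sqrt_lt_R0.
have sqsq : sq * sq = inner q0 q0 by apply: sqrt_sqrt; lra.
exists (vscale (/ sq) q0); split.
  by rewrite inner_scalel inner_scaler -sqsq; field; lra.
move=> c Cc; rewrite !inner_scalel.
by apply: Rmult_le_compat_l; [exact/Rlt_le/Rinv_0_lt_compat | exact: Hq0].
Qed.

Lemma support (ps : nat -> vec d) p : (forall j, ~ C (ps j)) -> conv ps p ->
  exists q, inner q q = 1 /\ forall c, C c -> inner q c <= inner q p.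
Proof.
move=> Hps Hp.
have [qs Hqs] := ClassicalEpsilon.choice _ (fun j => separation (Hps j)).
have Bd : forall k i, Rabs (qs k i) <= 1.
  move=> k i; apply: Rabs_le; have := coord_sq_le_inner (qs k) i; rewrite (Hqs k).1; nra.
have [phi [Hphi [q Hq]]] := bounded_conv_subseq Bd.
exists q; split.
  have := conv_inner Hq Hq.
  have -> : (fun k => inner (qs (phi k)) (qs (phi k))) = (fun _ => 1).
    by apply: functional_extensionality => k; rewrite (Hqs (phi k)).1.
  by move=> h; exact: UL_sequence h (cv_const 1).
move=> c Cc.
apply: (Rle_cv_lim (fun k => (Hqs (phi k)).2 c Cc)); first exact: conv_inner Hq (conv_const c).
exact: conv_inner Hq (conv_subseq Hphi Hp).
Qed.

End Separation.

(* [R^n x R^n] is encoded as [R^(n + n)], the inner product splitting accordingly. *)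
Section PairEncoding.
Variable n : nat.

Definition enc (a b : vec n) : vec (n + n) :=
  fun i => match fintype.split i with inl j => a j | inr j => b j end.
Definition fst2 (q : vec (n + n)) : vec n := fun j => q (lshift n j).
Definition snd2 (q : vec (n + n)) : vec n := fun j => q (rshift n j).

Lemma fst2_enc a b : fst2 (enc a b) = a.
Proof. by apply: vec_eq => j; rewrite /fst2 /enc (unsplitK (inl j)). Qed.
Lemma snd2_enc a b : snd2 (enc a b) = b.
Proof. by apply: vec_eq => j; rewrite /snd2 /enc (unsplitK (inr j)). Qed.
Lemma enc_fst2_snd2 q : enc (fst2 q) (snd2 q) = q.
Proof.
apply: vec_eq => i; rewrite /enc /fst2 /snd2.
by move: (splitK i); case: (fintype.split i) => j /= <-;
  rewrite ?(unsplitK (inl j)) ?(unsplitK (inr j)).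
Qed.
Lemma inner_enc q a b : inner q (enc a b) = inner (fst2 q) a + inner (snd2 q) b.
Proof.
rewrite /inner big_split_ord /=; congr Rplus; apply: eq_bigr => j _;
  by rewrite /enc /fst2 /snd2 ?(unsplitK (inl j)) ?(unsplitK (inr j)).
Qed.
Lemma inner_split q : inner q q = inner (fst2 q) (fst2 q) + inner (snd2 q) (snd2 q).
Proof. by rewrite -{2}(enc_fst2_snd2 q) inner_enc. Qed.
Lemma enc_inj a b c d : enc a b = enc c d -> a = c /\ b = d.
Proof.
move=> h; split.
  by rewrite -(fst2_enc a b) -(fst2_enc c d) h.
by rewrite -(snd2_enc a b) -(snd2_enc c d) h.
Qed.
Lemma enc_convex_comb a1 b1 a2 b2 s t :
  vadd (vscale s (enc a1 b1)) (vscale t (enc a2 b2)) =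
  enc (vadd (vscale s a1) (vscale t a2)) (vadd (vscale s b1) (vscale t b2)).
Proof. by apply: vec_eq => i; rewrite /vadd /vscale /enc; case: (fintype.split i). Qed.
Lemma conv_enc as_ bs a b : conv as_ a -> conv bs b -> conv (fun k => enc (as_ k) (bs k)) (enc a b).
Proof. by move=> H1 H2 i; rewrite /enc; case: (fintype.split i) => j; [exact: H1 | exact: H2]. Qed.

End PairEncoding.

(** * The max-min problem *)

Section ConeProgram.
Variables (n m : nat) (K : vec n -> Prop) (N N3 : vec n -> R) (L : vec n -> Prop).
Hypotheses (HK : regular_cone K) (HN : is_norm N) (HN3 : is_norm N3) (HL : in_Gr L m).

Lemma cone_closed : closedV K.
Proof. by case: HK. Qed.
Lemma cone_zero : K vzero.
Proof. by case: HK => _ []. Qed.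
Lemma cone_scale x t : K x -> 0 <= t -> K (vscale t x).
Proof. by case: HK => _ [_ [H _]]; apply: H. Qed.
Lemma cone_add x y : K x -> K y -> K (vadd x y).
Proof. by case: HK => _ [_ [_ [H _]]]; apply: H. Qed.
Lemma cone_pointed x : K x -> K (vopp x) -> x = vzero.
Proof. by case: HK => _ [_ [_ [_ [H _]]]]; apply: H. Qed.

Lemma int_pt_scale x r a : 0 < a -> (forall y, (forall i, Rabs (y i - x i) < r) -> K y) ->
  forall y, (forall i, Rabs (y i - a * x i) < a * r) -> K y.
Proof.
move=> a0 Hr y Hy.
have -> : y = vscale a (vscale (/ a) y) by apply: vec_eq => i; rewrite /vscale; field; lra.
apply: cone_scale; last lra.
apply: Hr => i; rewrite /vscale.
have -> : / a * y i - x i = / a * (y i - a * x i) by field; lra.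
rewrite Rabs_mult Rabs_right; last exact/Rle_ge/Rlt_le/Rinv_0_lt_compat.
apply: (Rmult_lt_reg_l a) => //.
by have -> : a * (/ a * Rabs (y i - a * x i)) = Rabs (y i - a * x i) by field; lra.
Qed.

Definition Lball x := L x /\ N x <= 1.

Lemma Lball_zero : Lball vzero.
Proof. split; [exact: subspace_zero HL | rewrite (norm_zero HN); lra]. Qed.

Lemma Lball_closed : closedV Lball.
Proof.
move=> xs x H Hx; split; first exact: (subspace_closed HL (fun k => (H k).1) Hx).
exact: Rle_cv_lim (fun k => (H k).2) (norm_cv HN Hx) (cv_const 1).
Qed.

Lemma Lball_convex : convexV Lball.
Proof.
move=> x y th [Lx Nx] [Ly Ny] hth; split; last exact: norm_convex_comb.
by apply: (subspace_add HL); apply: (subspace_scale HL).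
Qed.

Definition lam_max v t := (exists x, Lball x /\ K (vsub x (vscale t v))) /\
  forall x t', Lball x -> K (vsub x (vscale t' v)) -> t' <= t.

Lemma lam_max_IsMaxOf v t : lam_max v t -> IsMaxOf Lball (lam K v) (ERfin t).
Proof.
case=> [[x [Bx Kx]] Hup]; split.
  exists x; split => //; apply: ER_le_antisym; last exact: lam_ge.
  by apply: lam_le => t'; exact: Hup.
by move=> y By; apply: lam_le => t'; exact: Hup.
Qed.

Lemma lam_max_ge0 v t : lam_max v t -> 0 <= t.
Proof.
case=> _ H; apply: (H vzero 0 Lball_zero).
suff -> : vsub vzero (vscale 0 v) = vzero by exact: cone_zero.
by apply: vec_eq => i; rewrite /vsub /vscale /vzero; ring.
Qed.

(* Unbounded [t] would give, after division by [t], [-v] in the closed cone. *)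
Lemma lam_bounded v : K v -> v <> vzero ->
  exists T, forall x t, Lball x -> K (vsub x (vscale t v)) -> t <= T.
Proof.
move=> Kv Hv0; apply: NNPP => Hno.
have H : forall j : nat, exists p : vec n * R,
    Lball p.1 /\ K (vsub p.1 (vscale p.2 v)) /\ INR j + 1 < p.2.
  move=> j; apply: NNPP => Hj; apply: Hno; exists (INR j + 1) => x t Bx Kx.
  by apply: Rnot_lt_le => ht; apply: Hj; exists (x, t).
case: (ClassicalEpsilon.choice _ H) => p Hp.
have [cN [cN0 HcN]] := norm_ball_bounded HN.
have tpos : forall j, 0 < (p j).2 by move=> j; have := (Hp j).2.2; have := pos_INR j; lra.
pose zs j := vscale (/ (p j).2) (vsub (p j).1 (vscale (p j).2 v)).
have Kz : forall j, K (zs j).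
  by move=> j; apply: cone_scale; [exact: (Hp j).2.1 | exact/Rlt_le/Rinv_0_lt_compat/tpos].
have Cz : conv zs (vopp v).
  move=> i; apply: cv_of_sub_cv0.
  have -> : (fun k => zs k i - vopp v i) = (fun k => / (p k).2 * (p k).1 i).
    apply: functional_extensionality => k; rewrite /zs /vscale /vsub /vopp; field.
    exact/Rgt_not_eq/tpos.
  apply: (cv_squeeze0 (C := cN) _ inv_INR_S_cv) => k.
  have hp := (Hp k).2.2; have ht := tpos k; have hj := pos_INR k.
  have hinv : 0 < / (p k).2 by exact: Rinv_0_lt_compat.
  rewrite Rabs_mult Rabs_right; last exact/Rle_ge/Rlt_le.
  have hb := HcN _ (Hp k).1.2 i.
  have : / (p k).2 <= / (INR k + 1) by apply: Rinv_le_contravar; lra.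
  have := Rabs_pos ((p k).1 i); nra.
exact/Hv0/cone_pointed/(cone_closed Kz Cz).
Qed.

Lemma lam_max_exists v : K v -> v <> vzero -> exists t, lam_max v t.
Proof.
move=> Kv Hv0; have [T HT] := lam_bounded Kv Hv0.
pose Phi t := exists x, Lball x /\ K (vsub x (vscale t v)).
have Phi0 : Phi 0.
  exists vzero; split; first exact: Lball_zero.
  suff -> : vsub vzero (vscale 0 v) = vzero by exact: cone_zero.
  by apply: vec_eq => i; rewrite /vsub /vscale /vzero; ring.
have Phib : bound Phi by exists T => t [x [Bx Kx]]; exact: HT Kx.
case: (completeness Phi Phib (ex_intro _ 0 Phi0)) => ts Hts.
have H : forall j : nat, exists p : vec n * R,
    Lball p.1 /\ K (vsub p.1 (vscale p.2 v)) /\ ts - / (INR j + 1) < p.2.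
  by move=> j; have [t [[x [Bx Kx]] Ht]] := lub_approx j Hts; exists (x, t).
case: (ClassicalEpsilon.choice _ H) => p Hp.
have [cN [cN0 HcN]] := norm_ball_bounded HN.
have [phi [Hphi [x Hx]]] := bounded_conv_subseq (fun k i => HcN _ (Hp k).1.2 i).
have Ht : Un_cv (fun k => (p (phi k)).2) ts.
  apply: cv_of_sub_cv0; apply: (cv_squeeze0 (C := 1) _ (cv_subseq Hphi inv_INR_S_cv)) => k.
  have h1 := (Hp (phi k)).2.2.
  have h2 : (p (phi k)).2 <= ts.
    by apply: Hts.1; exists (p (phi k)).1; exact: (conj (Hp _).1 (Hp _).2.1).
  rewrite Rabs_left1; lra.
exists ts; split; last by move=> y t By Ky; apply: Hts.1; exists y.
exists x; split; first exact: Lball_closed (fun k => (Hp (phi k)).1) Hx.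
apply: (cone_closed (fun k => (Hp (phi k)).2.1)).
exact: conv_sub Hx (conv_scale Ht (conv_const v)).
Qed.

Hypothesis Hn : (0 < n)%coq_nat.
Hypothesis HLint : exists x, L x /\ int_pt K x.

Lemma int_pt_neq0 x : int_pt K x -> x <> vzero.
Proof.
move=> [r [r0 Hr]] Hx; subst x.
pose i0 := Ordinal (introT ltP Hn).
pose y : vec n := fun j => if j == i0 then r / 2 else 0.
have Hsmall : forall j, Rabs (y j) < r.
  by move=> j; rewrite /y; case: (j == i0); rewrite ?Rabs_R0 ?Rabs_right; lra.
have Ky : K y by apply: Hr => j; rewrite /vzero Rminus_0_r.
have Kmy : K (vopp y) by apply: Hr => j; rewrite /vzero /vopp Rminus_0_r Rabs_Ropp.
have := congr1 (fun f => f i0) (cone_pointed Ky Kmy); rewrite /y eqxx /vzero /=; lra.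
Qed.

Lemma Lball_interior : exists x1 r1, Lball x1 /\ 0 < r1 /\
  forall y, (forall i, Rabs (y i - x1 i) < r1) -> K y.
Proof.
case: HLint => x0 [Lx0 [r [r0 Hr]]].
have N0 := norm_ge0 HN x0.
pose a := / (N x0 + 1).
have a0 : 0 < a by apply: Rinv_0_lt_compat; lra.
exists (vscale a x0), (a * r); split; last by split; [nra | exact: int_pt_scale].
split; first exact: (subspace_scale HL _ Lx0).
rewrite (normZ HN) Rabs_right; last lra.
apply: (Rmult_le_reg_l (N x0 + 1)); first lra.
have -> : (N x0 + 1) * (a * N x0) = N x0 by rewrite /a; field; lra.
lra.
Qed.

Definition unitK v := K v /\ N3 v = 1.

Lemma unitK_bounded : exists c3, 0 < c3 /\ forall v, unitK v -> sabs v <= c3.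
Proof.
have [c [c0 Hc]] := sabs_le_norm HN3; exists c; split => // v [_ Hv].
by have := Hc v; rewrite Hv Rmult_1_r.
Qed.

Lemma unitK_neq0 v : unitK v -> v <> vzero.
Proof. by move=> [_ Hv] h; rewrite h (norm_zero HN3) in Hv; lra. Qed.

Lemma unitK_exists : exists v, unitK v.
Proof.
case: HLint => x0 [_ Ix0].
have hN : 0 < N3 x0.
  case: (Rle_lt_or_eq_dec _ _ (norm_ge0 HN3 x0)) => // /esym /(norm_eq0 HN3).
  by move/(int_pt_neq0 Ix0).
exists (vscale (/ N3 x0) x0); split; last exact: norm_normalize.
case: Ix0 => r [r0 Hr]; apply: cone_scale; last exact/Rlt_le/Rinv_0_lt_compat.
by apply: Hr => i; rewrite Rminus_diag Rabs_R0.
Qed.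

Lemma lam_max_gt0 v t : unitK v -> lam_max v t -> 0 < t.
Proof.
move=> Vv [_ Ht].
have [x1 [r1 [Bx1 [r10 Hr1]]]] := Lball_interior.
have [c3 [c30 Hc3]] := unitK_bounded.
pose eps := r1 / (2 * (c3 + 1)).
have e0 : 0 < eps by apply: Rdiv_lt_0_compat; lra.
have Eeps : eps * (2 * (c3 + 1)) = r1 by rewrite /eps; field; lra.
suff : eps <= t by lra.
apply: (Ht x1) => //; apply: Hr1 => i; rewrite /vsub /vscale.
have -> : x1 i - eps * v i - x1 i = - (eps * v i) by ring.
rewrite Rabs_Ropp Rabs_mult Rabs_right; last lra.
have : Rabs (v i) <= c3 by apply: Rle_trans (coord_le_sabs v i) (Hc3 _ Vv).
have := Rabs_pos (v i); nra.
Qed.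

(* Mixing an optimal point with the interior point [x1] gives a cone ball of
   radius [th * r1] around the mixture, which absorbs the change of [v]. *)
Lemma lam_max_lsc vs ts th : lam_max vs ts -> 0 < th < 1 ->
  exists d, 0 < d /\ forall v t, sabs (vsub v vs) < d -> lam_max v t -> (1 - th) * ts <= t.
Proof.
move=> Os hth.
have [x1 [r1 [Bx1 [r10 Hr1]]]] := Lball_interior.
case: (Os) => [[xs [Bxs Kxs]] _].
have ts0 := lam_max_ge0 Os.
pose d := th * r1 / ((1 - th) * ts + 1).
have Ed : ((1 - th) * ts + 1) * d = th * r1 by rewrite /d; field; nra.
have d0 : 0 < d by apply: Rdiv_lt_0_compat; nra.
exists d; split => // v t Hv [_ Hopt].
pose z := vadd (vscale (1 - th) xs) (vscale th x1).
apply: (Hopt z); first by apply: Lball_convex => //; lra.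
have -> : vsub z (vscale ((1 - th) * ts) v) =
    vadd (vscale (1 - th) (vsub xs (vscale ts vs)))
         (vadd (vscale th x1) (vscale ((1 - th) * ts) (vsub vs v))).
  by apply: vec_eq => i; rewrite /z /vadd /vsub /vscale; ring.
apply: cone_add; first by apply: cone_scale => //; lra.
apply: (int_pt_scale hth.1 Hr1) => i; rewrite /vadd /vscale /vsub.
have -> : th * x1 i + (1 - th) * ts * (vs i - v i) - th * x1 i = (1 - th) * ts * (vs i - v i).
  by ring.
have hc : Rabs (vs i - v i) <= sabs (vsub v vs).
  by rewrite -Rabs_Ropp; have := coord_le_sabs (vsub v vs) i; rewrite /vsub Ropp_minus_distr.
rewrite Rabs_mult Rabs_right; last by apply: Rle_ge; nra.
have hs := sabs_ge0 (vsub v vs); have hm : 0 <= (1 - th) * ts by nra.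
have : (1 - th) * ts * Rabs (vs i - v i) <= (1 - th) * ts * sabs (vsub v vs).
  exact: Rmult_le_compat_l.
have : ((1 - th) * ts + 1) * sabs (vsub v vs) < ((1 - th) * ts + 1) * d.
  by apply: Rmult_lt_compat_l; lra.
nra.
Qed.

(* A minimising sequence has a convergent subsequence, and lower
   semicontinuity transfers the infimum to its limit. *)
Lemma lam_min_exists : exists vs s, unitK vs /\ lam_max vs s /\
  forall v t, unitK v -> lam_max v t -> s <= t.
Proof.
pose Psi r := exists v t, unitK v /\ lam_max v t /\ r = - t.
have [v0 V0] := unitK_exists.
have [t0 Ot0] := lam_max_exists V0.1 (unitK_neq0 V0).
have Psib : bound Psi by exists 0 => r [v [t [_ [Ot ->]]]]; have := lam_max_ge0 Ot; lra.
have Psi0 : Psi (- t0) by exists v0, t0.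
case: (completeness Psi Psib (ex_intro _ _ Psi0)) => sg Hsg.
have Hs : forall v t, unitK v -> lam_max v t -> - sg <= t.
  move=> v t V Ot.
  by have := Hsg.1 (- t) (ex_intro _ v (ex_intro _ t (conj V (conj Ot erefl)))); lra.
have H : forall j : nat, exists p : vec n * R,
    unitK p.1 /\ lam_max p.1 p.2 /\ p.2 < - sg + / (INR j + 1).
  move=> j; have [r [[v [t [V [Ot ->]]]] Hr]] := lub_approx j Hsg.
  by exists (v, t); do !split => //=; lra.
case: (ClassicalEpsilon.choice _ H) => p Hp.
have [c3 [c30 Hc3]] := unitK_bounded.
have [phi [Hphi [vs Hvs]]] :=
  bounded_conv_subseq (fun k i => Rle_trans _ _ _ (coord_le_sabs _ i) (Hc3 _ (Hp k).1)).
have Vs : unitK vs.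
  split; first exact: (cone_closed (fun k => (Hp (phi k)).1.1) Hvs).
  apply: (UL_sequence _ _ _ (norm_cv HN3 Hvs)).
  have -> : (fun k => N3 (p (phi k)).1) = (fun _ => 1).
    by apply: functional_extensionality => k; rewrite (Hp (phi k)).1.2.
  exact: cv_const.
have [ts Ots] := lam_max_exists Vs.1 (unitK_neq0 Vs).
exists vs, ts; do !split => //.
suff hts : ts <= - sg by move=> v t V Ot; have := Hs v t V Ot; lra.
apply: le_of_forall_scaled_le; first exact: lam_max_ge0 Ots.
move=> th hth; apply: Rle_plus_epsilon => e he.
have [d [d0 Hd]] := lam_max_lsc Ots hth.
case: (sabs_sub_cv Hvs d0) => K1 HK1.
case: (inv_INR_S_cv he) => K2 HK2.
have hk1 := HK1 (K1 + K2)%coq_nat ltac:(lia).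
have hk2 := HK2 (phi (K1 + K2)%coq_nat) ltac:(have := strict_incr_ge Hphi (K1 + K2)%coq_nat; lia).
rewrite /R_dist Rminus_0_r in hk1; rewrite /R_dist Rminus_0_r in hk2.
have := Hd _ _ (Rle_lt_trans _ _ _ (Rle_abs _) hk1) (Hp _).2.1.
have := (Hp (phi (K1 + K2)%coq_nat)).2.2; have := Rle_abs (/ (INR (phi (K1 + K2)%coq_nat) + 1)).
lra.
Qed.

(* A maximiser [x] with [N x < 1] could be pushed out to [x / N x], raising [t]. *)
Lemma lam_max_sphere v t : unitK v -> lam_max v t ->
  exists x, L x /\ N x = 1 /\ K (vsub x (vscale t v)).
Proof.
move=> V Ot; have tpos := lam_max_gt0 V Ot.
case: (Ot) => [[x [[Lx Nx] Kx]] Hup].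
have Npos : 0 < N x.
  case: (Rle_lt_or_eq_dec _ _ (norm_ge0 HN x)) => // /esym /(norm_eq0 HN) x0.
  case: (unitK_neq0 V); apply: cone_pointed; first exact: V.1.
  have -> : vopp v = vscale (/ t) (vsub x (vscale t v)).
    by apply: vec_eq => i; rewrite x0 /vopp /vscale /vsub /vzero; field; lra.
  by apply: cone_scale => //; exact/Rlt_le/Rinv_0_lt_compat.
exists x; do !split => //; apply: Rle_antisym => //; apply: Rnot_lt_le => hlt.
have hB : Lball (vscale (/ N x) x).
  by split; [exact: (subspace_scale HL _ Lx) | rewrite norm_normalize //; lra].
have hK : K (vsub (vscale (/ N x) x) (vscale (t / N x) v)).
  have -> : vsub (vscale (/ N x) x) (vscale (t / N x) v) = vscale (/ N x) (vsub x (vscale t v)).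
    by apply: vec_eq => i; rewrite /vscale /vsub; field; lra.
  by apply: cone_scale => //; exact/Rlt_le/Rinv_0_lt_compat.
have := Hup _ _ hB hK.
have : t < t / N x.
  apply: (Rmult_lt_reg_l (N x)) => //.
  have -> : N x * (t / N x) = t by field; lra.
  nra.
lra.
Qed.

Lemma lam_max_IsMaxOf_sphere v t : unitK v -> lam_max v t ->
  IsMaxOf (fun x => L x /\ N x = 1) (lam K v) (ERfin t).
Proof.
move=> V Ot; have [x [Lx [Nx Kx]]] := lam_max_sphere V Ot.
have [_ Hup] := Ot.
have Hle : forall y, L y /\ N y = 1 -> ER_le (lam K v y) (ERfin t).
  by move=> y [Ly Ny]; apply: lam_le => t'; apply: Hup; split => //; lra.
split => //; exists x; split => //.
exact: ER_le_antisym (Hle x (conj Lx Nx)) (lam_ge Kx).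
Qed.

Lemma lam_min_IsMinOf (X : vec n -> Prop) vs s :
  (forall v t, unitK v -> lam_max v t -> IsMaxOf X (lam K v) (ERfin t)) ->
  unitK vs -> lam_max vs s -> (forall v t, unitK v -> lam_max v t -> s <= t) ->
  IsMinOf unitK (fun v => supOver X (lam K v)) (ERfin s).
Proof.
move=> HX Vs Os Hmin; split.
  by exists vs; split => //; exact: IsMaxOf_sup (HX _ _ Vs Os).
move=> v V; have [t Ot] := lam_max_exists V.1 (unitK_neq0 V).
by rewrite (IsMaxOf_sup (HX _ _ V Ot)) /=; exact: Hmin _ _ V Ot.
Qed.

Lemma weak_duality s v y u : (forall v t, unitK v -> lam_max v t -> s <= t) ->
  unitK v -> orth L y -> dual_cone K u -> inner u v = 1 ->
  ER_le (ERfin s) (dualnorm N (vsub u y)).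
Proof.
move=> Hmin V Hy Hu Huv.
have [t Ot] := lam_max_exists V.1 (unitK_neq0 V).
have [x [Lx [Nx Kx]]] := lam_max_sphere V Ot.
apply: ER_le_trans (dualnorm_ge _ Nx) => /=.
have := Hmin _ _ V Ot; have := Hu _ Kx.
rewrite inner_subr inner_scaler Huv inner_subl (inner_sym y x) (Hy _ Lx); lra.
Qed.

(** * Strong duality *)

Definition gap_set (g : vec (n + n)) :=
  exists x k l, N x <= 1 /\ K k /\ L l /\ g = enc (vsub x k) (vsub x l).

Lemma gap_set_convex : convexV gap_set.
Proof.
move=> g1 g2 th [x1 [k1 [l1 [N1 [K1 [L1 ->]]]]]] [x2 [k2 [l2 [N2 [K2 [L2 ->]]]]]] hth.
exists (vadd (vscale (1 - th) x1) (vscale th x2)), (vadd (vscale (1 - th) k1) (vscale th k2)),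
  (vadd (vscale (1 - th) l1) (vscale th l2)).
split; first exact: norm_convex_comb.
split; first by apply: cone_add; apply: cone_scale => //; lra.
split; first by apply: (subspace_add HL); apply: (subspace_scale HL).
by rewrite enc_convex_comb; congr enc; apply: vec_eq => i; rewrite /vadd /vscale /vsub; ring.
Qed.

Lemma gap_set_closed : closedV gap_set.
Proof.
move=> gs g Hg Hgc.
have {}Hg : forall k, exists p : vec n * vec n * vec n, N p.1.1 <= 1 /\ K p.1.2 /\ L p.2 /\
    gs k = enc (vsub p.1.1 p.1.2) (vsub p.1.1 p.2).
  by move=> k; have [x [k0 [l0 H]]] := Hg k; exists (x, k0, l0).
case: (ClassicalEpsilon.choice _ Hg) => p Hp.
have [cN [cN0 HcN]] := norm_ball_bounded HN.
have [phi [Hphi [xl Hxl]]] := bounded_conv_subseq (fun k i => HcN _ (Hp k).1 i).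
have Hg1 : conv (fun k => fst2 (gs (phi k))) (fst2 g) by move=> j; exact: (conv_subseq Hphi Hgc).
have Hg2 : conv (fun k => snd2 (gs (phi k))) (snd2 g) by move=> j; exact: (conv_subseq Hphi Hgc).
have Ek : forall k, (p k).1.2 = vsub (p k).1.1 (fst2 (gs k)).
  by move=> k; rewrite (Hp k).2.2.2 fst2_enc; apply: vec_eq => i; rewrite /vsub; ring.
have El : forall k, (p k).2 = vsub (p k).1.1 (snd2 (gs k)).
  by move=> k; rewrite (Hp k).2.2.2 snd2_enc; apply: vec_eq => i; rewrite /vsub; ring.
exists xl, (vsub xl (fst2 g)), (vsub xl (snd2 g)); split.
  exact: Rle_cv_lim (fun k => (Hp (phi k)).1) (norm_cv HN Hxl) (cv_const 1).
split.
  apply: (@cone_closed (fun k => vsub (p (phi k)).1.1 (fst2 (gs (phi k))))); last exact: conv_sub.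
  by move=> k; rewrite -Ek; exact: (Hp (phi k)).2.1.
split.
  apply: (@subspace_closed _ _ _ HL (fun k => vsub (p (phi k)).1.1 (snd2 (gs (phi k))))).
    by move=> k; rewrite -El; exact: (Hp (phi k)).2.2.1.
  exact: conv_sub.
by rewrite -{1}(enc_fst2_snd2 g); congr enc; apply: vec_eq => i; rewrite /vsub; ring.
Qed.

Lemma gap_set_avoids vs s e : lam_max vs s -> 0 < e -> ~ gap_set (enc (vscale (s + e) vs) vzero).
Proof.
move=> [_ Hup] he [x [k [l [Nx [Kk [Ll /enc_inj [E1 E2]]]]]]].
have xl : x = l by apply: vec_eq => i; have := congr1 (fun f => f i) E2; rewrite /vzero /vsub; lra.
have Kx : K (vsub x (vscale (s + e) vs)).
  suff -> : vsub x (vscale (s + e) vs) = k by [].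
  by apply: vec_eq => i; have := congr1 (fun f => f i) E1; rewrite /vsub /vscale; lra.
have := Hup x _ (conj (eq_ind_r L Ll xl) Nx) Kx; lra.
Qed.

Definition supports (w y : vec n) (beta : R) :=
  forall x k l, N x <= 1 -> K k -> L l -> inner w (vsub x k) + inner y (vsub x l) <= beta.

Lemma gap_set_support vs s : lam_max vs s ->
  exists w y, inner w w + inner y y = 1 /\ supports w y (s * inner w vs).
Proof.
move=> Os.
have Gne : exists g, gap_set g.
  exists (enc (vsub vzero vzero) (vsub vzero vzero)), vzero, vzero, vzero.
  split; first by rewrite (norm_zero HN); lra.
  by split; [exact: cone_zero | split; [exact: subspace_zero HL |]].
have Hpc : conv (fun j => enc (vscale (s + / (INR j + 1)) vs) vzero) (enc (vscale s vs) vzero).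
  exact: conv_enc (conv_scale (cv_add_inv_INR_S s) (conv_const vs)) (conv_const vzero).
have [q [Hq1 Hq]] := support gap_set_convex gap_set_closed Gne
  (fun j => gap_set_avoids Os (inv_INR_S_gt0 j)) Hpc.
exists (fst2 q), (snd2 q); split; first by rewrite -inner_split.
move=> x k l Nx Kk Ll.
have := Hq _ (ex_intro _ x (ex_intro _ k (ex_intro _ l (conj Nx (conj Kk (conj Ll erefl)))))).
by rewrite !inner_enc inner_zeror inner_scaler; lra.
Qed.

Section Supports.
Variables (w y : vec n) (beta : R).
Hypothesis Hsup : supports w y beta.

(* Homogeneity in one variable: a linear function bounded above vanishes. *)
Lemma supports_orth : orth L y.
Proof.
move=> l Ll; rewrite inner_sym; apply: NNPP => hne.
have N0 : N vzero <= 1 by rewrite (norm_zero HN); lra.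
pose c := - (Rabs beta + 1) / inner y l.
have Ec : c * inner y l = - (Rabs beta + 1) by rewrite /c; field.
have := @Hsup vzero vzero (vscale c l) N0 cone_zero (subspace_scale HL _ Ll).
rewrite !inner_subr !inner_zeror inner_scaler; have := Rle_abs beta; lra.
Qed.

Lemma supports_dual : dual_cone K w.
Proof.
move=> k Kk; apply: Rnot_lt_le => hlt.
have N0 : N vzero <= 1 by rewrite (norm_zero HN); lra.
pose c := (Rabs beta + 1) / - inner w k.
have c0 : 0 <= c by apply/Rlt_le/Rdiv_lt_0_compat; have := Rabs_pos beta; lra.
have Ec : c * inner w k = - (Rabs beta + 1) by rewrite /c; field; lra.
have := @Hsup vzero (vscale c k) vzero N0 (cone_scale Kk c0) (subspace_zero HL).
rewrite !inner_subr !inner_zeror inner_scaler; have := Rle_abs beta; lra.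
Qed.

Lemma supports_ball x : N x <= 1 -> inner (vadd w y) x <= beta.
Proof.
move=> Nx; have := @Hsup x vzero vzero Nx cone_zero (subspace_zero HL).
suff -> : vsub x vzero = x by rewrite inner_addl.
by apply: vec_eq => i; rewrite /vsub /vzero; ring.
Qed.

Lemma supports_opp : beta <= 0 -> w = vopp y.
Proof.
move=> hb; pose z := vadd w y.
suff z0 : z = vzero.
  by apply: vec_eq => i; have := congr1 (fun f => f i) z0; rewrite /z /vadd /vopp /vzero; lra.
apply: inner_eq0; apply: Rle_antisym; last exact: inner_ge0.
have hN := norm_ge0 HN z.
have hinv : 0 < / (N z + 1) by apply: Rinv_0_lt_compat; lra.
have h1 : / (N z + 1) * N z <= 1.
  apply: (Rmult_le_reg_l (N z + 1)); first lra.
  have -> : (N z + 1) * (/ (N z + 1) * N z) = N z by field; lra.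
  lra.
have := @supports_ball (vscale (/ (N z + 1)) z).
rewrite -/z inner_scaler (normZ HN) Rabs_right; last lra.
move=> /(_ h1); have := inner_ge0 z; nra.
Qed.

(* With [w = -y], [w] is orthogonal to an interior point [x0] of [K] and
   nonnegative on a ball around it, hence [w = y = 0]. *)
Lemma supports_gt0 : inner w w + inner y y = 1 -> 0 < beta.
Proof.
move=> Hq1; apply: Rnot_le_lt => /supports_opp wy.
case: HLint => x0 [Lx0 [r [r0 Hr]]].
have wx0 : inner w x0 = 0 by rewrite wy inner_oppl inner_sym supports_orth; [ring | exact: Lx0].
pose eps := r / (2 * (sabs w + 1)).
have hs := sabs_ge0 w.
have e0 : 0 < eps by apply: Rdiv_lt_0_compat; lra.
have Eeps : eps * (2 * (sabs w + 1)) = r by rewrite /eps; field; lra.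
have Kxe : K (vsub x0 (vscale eps w)).
  apply: Hr => i; rewrite /vsub /vscale.
  have -> : x0 i - eps * w i - x0 i = - (eps * w i) by ring.
  rewrite Rabs_Ropp Rabs_mult Rabs_right; last lra.
  have := coord_le_sabs w i; have := Rabs_pos (w i); nra.
have := supports_dual Kxe; rewrite inner_subr inner_scaler wx0 => h.
have w0 : w = vzero by apply: inner_eq0; have := inner_ge0 w; nra.
have y0 : y = vzero.
  by apply: vec_eq => i; have := congr1 (fun f => f i) wy; rewrite w0 /vopp /vzero; lra.
by move: Hq1; rewrite w0 y0 inner_zerol; lra.
Qed.

End Supports.

Lemma dual_certificate vs s : lam_max vs s -> exists u y,
  dual_cone K u /\ orth L y /\ inner u vs = 1 /\ ER_le (dualnorm N (vsub u y)) (ERfin s).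
Proof.
move=> Os; have [w [y [Hq1 Hsup]]] := gap_set_support Os.
have gpos : 0 < inner w vs.
  by have := supports_gt0 Hsup Hq1; have := lam_max_ge0 Os; nra.
pose ga := inner w vs.
have hg : 0 < / ga by exact: Rinv_0_lt_compat.
exists (vscale (/ ga) w), (vscale (- / ga) y); split.
  move=> k Kk; rewrite inner_scalel; apply: Rmult_le_pos; first lra.
  exact: supports_dual Hsup k Kk.
split; first by move=> x Lx; rewrite inner_scaler (supports_orth Hsup Lx); ring.
split; first by rewrite inner_scalel; apply: Rinv_l; rewrite /ga; lra.
apply: dualnorm_le => x Nx.
have -> : vsub (vscale (/ ga) w) (vscale (- / ga) y) = vscale (/ ga) (vadd w y).
  by apply: vec_eq => i; rewrite /vsub /vscale /vadd; ring.
rewrite inner_scalel.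
apply: Rle_trans (Rmult_le_compat_l _ _ _ (Rlt_le _ _ hg) (supports_ball Hsup (Req_le _ _ Nx))) _.
by right; rewrite /ga; field; lra.
Qed.

End ConeProgram.

Theorem mainTheorem8 (n m : nat) (K : vec n -> Prop) (N N3 : vec n -> R)
    (L : vec n -> Prop) :
  regular_cone K -> is_norm N -> is_norm N3 ->
  (1 <= m)%nat -> (m < n)%nat -> in_Gr L m ->
  (exists x, L x /\ int_pt K x) ->
  exists s : R,
    sigmaL K N N3 L = ERfin s /\
    (forall v, K v /\ N3 v = 1 ->
       exists M, IsMaxOf (fun x => L x /\ N x <= 1) (lam K v) M) /\
    IsMinOf (fun v => K v /\ N3 v = 1)
            (fun v => supOver (fun x => L x /\ N x <= 1) (lam K v)) (ERfin s) /\
    (forall v, K v /\ N3 v = 1 ->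
       exists M, IsMaxOf (fun x => L x /\ N x = 1) (lam K v) M) /\
    IsMinOf (fun v => K v /\ N3 v = 1)
            (fun v => supOver (fun x => L x /\ N x = 1) (lam K v)) (ERfin s) /\
    IsMinOf (fun p : vec n * vec n * vec n =>
               let '(v, y, u) := p in
               K v /\ orth L y /\ dual_cone K u /\ N3 v = 1 /\ inner u v = 1)
            (fun p : vec n * vec n * vec n =>
               let '(v, y, u) := p in dualnorm N (vsub u y))
            (ERfin s).
Proof.
move=> HK HN HN3 _ /ltP Hmn HL HLint.
have Hn : (0 < n)%coq_nat by lia.
have [vs [s [Vs [Os Hmin]]]] := lam_min_exists HK HN HN3 HL Hn HLint.
have Hopt v : unitK K N3 v -> exists t, lam_max K N L v t.
  by move=> V; exact: (lam_max_exists HK HN HL V.1 (unitK_neq0 HN3 V)).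
have MaxS := lam_max_IsMaxOf_sphere HK HN HN3 HL HLint.
have MinB := lam_min_IsMinOf HK HN HN3 HL (fun v t _ => @lam_max_IsMaxOf _ _ _ _ v t) Vs Os Hmin.
have Weak := weak_duality HK HN HN3 HL HLint Hmin.
have [u [y [Hu [Hy [Huv Hdual]]]]] := dual_certificate HK HN HL HLint Os.
exists s; split; first exact: IsMinOf_inf MinB.
split; first by move=> v /Hopt [t Ot]; exists (ERfin t); exact: lam_max_IsMaxOf.
split; first exact: MinB.
split; first by move=> v V; have [t Ot] := Hopt v V; exists (ERfin t); exact: MaxS.
split; first exact: (lam_min_IsMinOf HK HN HN3 HL MaxS Vs Os Hmin).
split.
  exists (vs, y, u); split; first by case: Vs.
  exact: ER_le_antisym Hdual (Weak _ _ _ Vs Hy Hu Huv).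
by case=> [[v y'] u'] [Kv [Hy' [Hu' [Nv Huv']]]]; exact: Weak (conj Kv Nv) Hy' Hu' Huv'.
Qed.
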